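(* Let $G=(U,V,E)$ be a finite bipartite graph, $F\subseteq E$, and let $(E_r,E_b)$ be an $(A,B,C)$-free bipartition of the set $E_c$ of committed edges of $G$. Let $E_u=E\setminus E_c$ be the set of uncommitted edges. Then the subgraph $(U,V,E_b\cup E_u)$ of $G$ is a chain graph.
   Context: A chain graph is a bipartite graph with no induced $2K_2$. $\hat{E}=\{uv: u\in U,\ v\in V,\ uv\notin E\}$. Two edges $u_1v_1,u_2v_2\in E$ ($u_i\in U$, $v_i\in V$) are in conflict in $G$ if $u_1v_2\notin E$ and $u_2v_1\notin E$. An edge is committed if it is in conflict with some other edge of $E$, and uncommitted otherwise. A bipartition of $E_c$ is a pair $(E_r,E_b)$ with $E_r\cap E_b=\emptyset$, $E_r\cup E_b=E_c$, $F\cap E_c\subseteq E_b$. It is $(A,B,C)$-free if there are no $u_1,u_2\in U$, $v_1,v_2\in V$ forming: $(A_1)$: $u_1v_1,u_2v_2\in E_r$, $u_1v_2,u_2v_1\in\hat{E}$; $(A_2)$: $u_1v_1,u_2v_2\in E_b$, $u_1v_2,u_2v_1\in\hat{E}$; $(B_1)$: $u_1v_1,u_2v_2\in E_r$, $u_1v_2\in\hat{E}$, $u_2v_1\in E_b$; $(B_2)$: $u_1v_1,u_2v_2\in E_b$, $u_1v_2\in\hat{E}$, $u_2v_1\in E_r$; $(C)$: $u_1v_1,u_2v_2\in E_r$, $u_1v_2\in\hat{E}$, $u_2v_1\in F$. *)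

(* A finite bipartite graph G = (U,V,E) is given by two
   finite types U, V (the sides) and an edge relation E : U -> V -> bool. *)
From mathcomp Require Import all_boot.
Set Implicit Arguments. Unset Strict Implicit. Unset Printing Implicit Defensive.

Definition brel (U V : finType) := U -> V -> bool.

Section Defs.
Variables (U V : finType).

Definition nonedge (E : brel U V) : brel U V := fun u v => ~~ E u v.

Definition in_conflict (E : brel U V) (u1 : U) (v1 : V) (u2 : U) (v2 : V) :=
  [&& E u1 v1, E u2 v2, ~~ E u1 v2 & ~~ E u2 v1].

Definition committed (E : brel U V) : brel U V := fun u v =>
  E u v && [exists u2 : U, exists v2 : V,
     ((u2, v2) != (u, v)) && in_conflict E u v u2 v2].

Definition uncommitted (E : brel U V) : brel U V := fun u v =>
  E u v && ~~ committed E u v.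

Definition bipartition (E F Er Eb : brel U V) : Prop :=
  (forall u v, ~~ (Er u v && Eb u v)) /\
  (forall u v, (Er u v || Eb u v) = committed E u v) /\
  (forall u v, F u v -> committed E u v -> Eb u v).

Definition ABC_free (E F Er Eb : brel U V) : Prop :=
  forall (u1 u2 : U) (v1 v2 : V),
    ~ [&& Er u1 v1, Er u2 v2, nonedge E u1 v2 & nonedge E u2 v1]   (* A1 *)
 /\ ~ [&& Eb u1 v1, Eb u2 v2, nonedge E u1 v2 & nonedge E u2 v1]   (* A2 *)
 /\ ~ [&& Er u1 v1, Er u2 v2, nonedge E u1 v2 & Eb u2 v1]          (* B1 *)
 /\ ~ [&& Eb u1 v1, Eb u2 v2, nonedge E u1 v2 & Er u2 v1]          (* B2 *)
 /\ ~ [&& Er u1 v1, Er u2 v2, nonedge E u1 v2 & F u2 v1].          (* C *)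

(* A bipartite graph (U,V,H) is a chain graph iff it has no induced 2K2.
   Since all edges go between U and V, an induced 2K2 is exactly
   u1v1, u2v2 edges with u1v2, u2v1 non-edges. *)
Definition chain_graph (H : brel U V) : Prop :=
  forall (u1 u2 : U) (v1 v2 : V),
    ~ [&& H u1 v1, H u2 v2, ~~ H u1 v2 & ~~ H u2 v1].

End Defs.

From mathcomp Require Import all_boot.
Set Implicit Arguments. Unset Strict Implicit. Unset Printing Implicit Defensive.

(* Call the edges of E_r red and those of E_b blue.  By (A1) and (A2) two
   conflicting committed edges have different colours, so an edge of
   H = E_b ∪ E_u in conflict with anything is blue and its partner red.
   In a 2K2 u1v1, u2v2 of H, a cross pair that is an edge of G lies outside H
   and is therefore red.  If both cross pairs are non-edges, u1v1 and u2v2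
   conflict although both are blue.  Otherwise a red cross edge u1v2 has a
   blue conflict partner u3v3; since members of H never conflict with blue
   edges, u3v1 and u2v3 are edges, and chasing colours through the resulting
   conflicts ends in a configuration (B1) or (B2). *)

Section Conflicts.
Variables (U V : finType) (E : brel U V).

Lemma in_conflict_sym a b c d :
  in_conflict E a b c d -> in_conflict E c d a b.
Proof. by case/and4P=> ab cd ad cb; apply/and4P. Qed.

Lemma committed_of_conflict a b c d :
  in_conflict E a b c d -> committed E a b.
Proof.
move=> abcd; have /and4P[ab _ _ cb] := abcd.
rewrite /committed ab; apply/existsP; exists c; apply/existsP; exists d.
by rewrite abcd andbT; apply: contraNneq cb => -[-> _].
Qed.

Lemma conflict_of_committed a b :
  committed E a b -> exists c d, in_conflict E a b c d.
Proof. by case/andP=> _ /existsP[c /existsP[d /andP[_ abcd]]]; exists c, d. Qed.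

Lemma committed_edge a b : committed E a b -> E a b.
Proof. by case/andP. Qed.

End Conflicts.

Definition blue_or_uncommitted (U V : finType) (E Eb : brel U V) : brel U V :=
  fun u v => Eb u v || uncommitted E u v.

Section Colouring.
Variables (U V : finType) (E F Er Eb : brel U V).
Hypothesis bip : bipartition E F Er Eb.
Hypothesis abc : ABC_free E F Er Eb.

Local Notation H := (blue_or_uncommitted E Eb).

Lemma red_committed a b : Er a b -> committed E a b.
Proof. by case: bip => _ [cover _] ab; rewrite -cover ab. Qed.

Lemma blue_committed a b : Eb a b -> committed E a b.
Proof. by case: bip => _ [cover _] ab; rewrite -cover ab orbT. Qed.

Lemma red_not_blue a b : Er a b -> ~~ Eb a b.
Proof. by case: bip => disj _ ab; have := disj a b; rewrite ab. Qed.

Lemma committed_red_or_blue a b : committed E a b -> Er a b || Eb a b.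
Proof. by case: bip => _ [cover _]; rewrite cover. Qed.

Lemma blue_or_uncommitted_edge a b : H a b -> E a b.
Proof. by case/orP=> [/blue_committed/committed_edge | /andP[]]. Qed.

Lemma blue_or_uncommitted_committed a b : H a b -> committed E a b -> Eb a b.
Proof. by case/orP=> // /andP[_ /negbTE->]. Qed.

Lemma red_of_edge a b : ~~ H a b -> E a b -> Er a b.
Proof.
rewrite negb_or /uncommitted => /andP[nb nu] ab; rewrite ab negbK /= in nu.
by have := committed_red_or_blue nu; rewrite (negbTE nb) orbF.
Qed.

Lemma conflict_red_blue a b c d : in_conflict E a b c d -> Er a b -> Eb c d.
Proof.
move=> abcd ab; have /and4P[_ _ ad cb] := abcd.
have /orP[cd | //] :=
  committed_red_or_blue (committed_of_conflict (in_conflict_sym abcd)).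
by case: (abc a c b d) => A1 _; case: A1; rewrite /nonedge ab cd ad cb.
Qed.

Lemma conflict_blue_red a b c d : in_conflict E a b c d -> Eb a b -> Er c d.
Proof.
move=> abcd ab; have /and4P[_ _ ad cb] := abcd.
have /orP[// | cd] :=
  committed_red_or_blue (committed_of_conflict (in_conflict_sym abcd)).
by case: (abc a c b d) => _ [A2 _]; case: A2; rewrite /nonedge ab cd ad cb.
Qed.

Lemma blue_or_uncommitted_conflict_false a b c d :
  in_conflict E a b c d -> H a b -> H c d -> False.
Proof.
move=> abcd ab cd.
have ab_blue := blue_or_uncommitted_committed ab (committed_of_conflict abcd).
have cd_blue :=
  blue_or_uncommitted_committed cd (committed_of_conflict (in_conflict_sym abcd)).
by have := red_not_blue (conflict_blue_red abcd ab_blue); rewrite cd_blue.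
Qed.

Lemma blue_or_uncommitted_of_blue a b : Eb a b -> H a b.
Proof. by rewrite /blue_or_uncommitted => ->. Qed.

Lemma blue_or_uncommitted_cross a b c d : H a b -> H c d -> E a d || E c b.
Proof.
move=> ab cd; apply: contraT; rewrite negb_or => /andP[ad cb].
have abcd : in_conflict E a b c d.
  by rewrite /in_conflict (blue_or_uncommitted_edge ab)
       (blue_or_uncommitted_edge cd) ad cb.
by case: (blue_or_uncommitted_conflict_false abcd ab cd).
Qed.

Lemma blue_or_uncommitted_blue_cross a b c d : H a b -> Eb c d -> E a d || E c b.
Proof.
by move=> ab /blue_or_uncommitted_of_blue; apply: blue_or_uncommitted_cross.
Qed.

Lemma two_red_crosses_false (u1 u2 u3 u4 : U) (v2 v3 v4 : V) :
  H u2 v2 -> Er u1 v2 -> Eb u3 v3 -> ~~ E u1 v3 -> ~~ E u3 v2 ->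
  Er u2 v3 -> Eb u1 v4 -> ~~ E u2 v4 -> False.
Proof.
move=> y p w n13 n32 r23 b14 n24.
have e34 : E u3 v4.
  have := blue_or_uncommitted_blue_cross (blue_or_uncommitted_of_blue b14) w.
  by rewrite (negbTE n13).
have y34 : in_conflict E u2 v2 u3 v4.
  by rewrite /in_conflict (blue_or_uncommitted_edge y) e34 n24 n32.
have y_blue := blue_or_uncommitted_committed y (committed_of_conflict y34).
case: (abc u1 u2 v2 v3) => _ [_ [B1 _]]; case: B1.
by rewrite /nonedge p r23 n13 y_blue.
Qed.

Lemma red_cross_false (u1 u2 : U) (v1 v2 : V) :
  H u1 v1 -> H u2 v2 -> ~~ H u2 v1 -> Er u1 v2 -> False.
Proof.
move=> x y nq p.
have [u3 [v3 pw]] := conflict_of_committed (red_committed p).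
have /and4P[_ _ n13 n32] := pw.
have w := conflict_red_blue pw p.
have e31 : E u3 v1.
  by have := blue_or_uncommitted_blue_cross x w;
    rewrite (negbTE n13).
have e23 : E u2 v3.
  by have := blue_or_uncommitted_blue_cross y w;
    rewrite (negbTE n32) orbF.
have [e21 | n21] := boolP (E u2 v1).
- have q := red_of_edge nq e21.
  have [u4 [v4 qz]] := conflict_of_committed (red_committed q).
  have /and4P[_ _ n24 n41] := qz.
  have z := conflict_red_blue qz q.
  have e14 : E u1 v4.
    by have := blue_or_uncommitted_blue_cross x z;
    rewrite (negbTE n41) orbF.
  have c : in_conflict E u2 v3 u1 v4 by rewrite /in_conflict e23 e14 n24 n13.
  have /orP[r23 | b23] := committed_red_or_blue (committed_of_conflict c).
  + exact: two_red_crosses_false y p w n13 n32 r23 (conflict_red_blue c r23) n24.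
  + exact: two_red_crosses_false x q z n24 n41 (conflict_blue_red c b23) b23 n13.
- have x23 : in_conflict E u1 v1 u2 v3.
    by rewrite /in_conflict (blue_or_uncommitted_edge x) e23 n13 n21.
  have x_blue := blue_or_uncommitted_committed x (committed_of_conflict x23).
  have y31 : in_conflict E u2 v2 u3 v1.
    by rewrite /in_conflict (blue_or_uncommitted_edge y) e31 n21 n32.
  have y_blue := blue_or_uncommitted_committed y (committed_of_conflict y31).
  case: (abc u2 u1 v2 v1) => _ [_ [_ [B2 _]]]; case: B2.
  by rewrite /nonedge y_blue x_blue n21 p.
Qed.

End Colouring.

Theorem lemma4 (U V : finType) (E F Er Eb : brel U V) :
  (forall u v, F u v -> E u v) ->
  bipartition E F Er Eb ->
  ABC_free E F Er Eb ->
  chain_graph (fun u v => Eb u v || uncommitted E u v).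
Proof.
move=> _ bip abc; change (chain_graph (blue_or_uncommitted E Eb)).
move=> u1 u2 v1 v2 /and4P[x y np nq].
have [e12 | n12] := boolP (E u1 v2).
  exact: (red_cross_false bip abc x y nq (red_of_edge bip np e12)).
have [e21 | n21] := boolP (E u2 v1).
  exact: (red_cross_false bip abc y x np (red_of_edge bip nq e21)).
by have := blue_or_uncommitted_cross bip abc x y; rewrite (negbTE n12) (negbTE n21).
Qed.
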